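(* If $(V,\rho)$ is a purely irreducible $\mathfrak{sl}(2)$-module, then it is a Casimir module (i.e. $C_\rho=\mu\,\mathrm{Id}_V$ for some $\mu\in\mathbb{C}$) and $\mathrm{End}_{\mathfrak{sl}(2)}(V)=\mathbb{C}$.
   Context: $\mathfrak{sl}(2)$ has basis $L_{-1}=f$, $L_0=-\tfrac12 h$, $L_1=-e$ for a Chevalley basis $e,f,h$. An $\mathfrak{sl}(2)$-module $(V,\rho)$ is a $\mathbb{C}[z]$-module via $z\cdot v=\rho(L_0)v$; its Casimir operator is $C_\rho=\rho(L_0)(\rho(L_0)-1)-\rho(L_{-1})\rho(L_1)$. A finite rank torsion free module is one that is torsion free over $\mathbb{C}[z]$ with localization $S^{-1}V$ ($S=\mathbb{C}[z]\setminus\{0\}$) finite-dimensional over $\mathbb{C}(z)$. A submodule $V'$ is pure if $V/V'$ is torsion free. $(V,\rho)$ is purely irreducible if it is a nonzero finite rank torsion free $\mathfrak{sl}(2)$-module having no pure $\mathfrak{sl}(2)$-submodules other than $0$ and $V$ (equivalently, every proper nonzero $\mathfrak{sl}(2)$-submodule $V'$ has $V/V'$ torsion; equivalently, $S^{-1}V$ with its induced $\mathfrak{sl}(2)$-action has no nonzero proper $\mathfrak{sl}(2)$-submodule that is a $\mathbb{C}(z)$-subspace). *)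

From HB Require Import structures.
From mathcomp Require Import all_boot all_order all_algebra.
From mathcomp Require Import complex.
From mathcomp Require Import reals.
Set Implicit Arguments. Unset Strict Implicit. Unset Printing Implicit Defensive.
Import Order.TTheory GRing.Theory Num.Theory.
Local Open Scope ring_scope.

Section Sl2.
Variable C : fieldType.
Variable V : lmodType C.

(* An sl(2)-module structure on V, given by the images of a Chevalley basis
   e, f, h, satisfying [h,e]=2e, [h,f]=-2f, [e,f]=h. *)
Record sl2_module := Sl2Module {
  rho_e : {linear V -> V};
  rho_f : {linear V -> V};
  rho_h : {linear V -> V};
  sl2_he : forall v, rho_h (rho_e v) - rho_e (rho_h v) = 2%:R *: rho_e v;
  sl2_hf : forall v, rho_h (rho_f v) - rho_f (rho_h v) = - (2%:R *: rho_f v);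
  sl2_ef : forall v, rho_e (rho_f v) - rho_f (rho_e v) = rho_h v
}.

Variable rho : sl2_module.

Definition Lm1 (v : V) : V := rho_f rho v.
Definition L0 (v : V) : V := - (2%:R^-1 *: rho_h rho v).
Definition L1 (v : V) : V := - rho_e rho v.

(* C[z]-module structure: z . v = L0 v, so p . v = p(L0) v *)
Definition zact (p : {poly C}) (v : V) : V :=
  \sum_(i < size p) p`_i *: iter i L0 v.

Definition casimir (v : V) : V := L0 (L0 v) - L0 v - Lm1 (L1 v).

Definition torsion_free : Prop :=
  forall (p : {poly C}) (v : V), p != 0 -> v != 0 -> zact p v != 0.

(* S^{-1}V is finite-dimensional over C(z): finitely many vectors whose
   images span S^{-1}V over C(z), i.e. every v satisfies s.v = sum a_i.v_i
   for some nonzero s in C[z] and a_i in C[z]. *)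
Definition finite_rank : Prop :=
  exists (n : nat) (vs : 'I_n -> V), forall v : V,
    exists (s : {poly C}) (a : 'I_n -> {poly C}),
      s != 0 /\ zact s v = \sum_(i < n) zact (a i) (vs i).

Definition sl2_submodule (W : V -> Prop) : Prop :=
  [/\ W 0,
      (forall u w, W u -> W w -> W (u + w)),
      (forall (c : C) w, W w -> W (c *: w)) &
      (forall w, W w -> [/\ W (rho_e rho w), W (rho_f rho w) & W (rho_h rho w)])].

(* pure: V/W is torsion free over C[z] *)
Definition pure_submodule (W : V -> Prop) : Prop :=
  sl2_submodule W /\
  forall (p : {poly C}) (v : V), p != 0 -> W (zact p v) -> W v.

Definition purely_irreducible : Prop :=
  [/\ exists v : V, v != 0,
      torsion_free, finite_rank &
      forall W, pure_submodule W -> (forall v, W v -> v = 0) \/ (forall v, W v)].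

Definition casimir_module : Prop :=
  exists mu : C, forall v, casimir v = mu *: v.

Definition sl2_endomorphism (phi : {linear V -> V}) : Prop :=
  forall v, [/\ phi (rho_e rho v) = rho_e rho (phi v),
                phi (rho_f rho v) = rho_f rho (phi v) &
                phi (rho_h rho v) = rho_h rho (phi v)].

End Sl2.

(* Write z for L0, so that V is a torsion-free C[z]-module of finite rank.
   First, e is injective: if e y = 0 with y <> 0, the vectors f^j y are all
   nonzero and the Casimir acts on them by the pairwise distinct polynomials
   (z - j)(z - j - 1); eigenvectors for distinct eigenvalues are C[z]-linearly
   independent, which contradicts finite rank.
   Next, an sl(2)-endomorphism phi commutes with z, so finite rank gives a
   nonzero P in C[z][T] with P(phi) = 0. As e p(z) = p(z + 1) e and e is
   injective, the polynomial obtained by substituting z - 1 in the coefficients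
   of P also kills phi; subtracting P lowers the degrees of the coefficients,
   so descending we reach a nonzero annihilating polynomial with constant
   coefficients. Hence phi has an eigenvalue l, and the l-eigenspace is a
   nonzero pure submodule, i.e. all of V. The Casimir commutes with sl(2), so
   it is a scalar too. *)

From Pilot Require Import Defs.
From HB Require Import structures.
From mathcomp Require Import all_boot all_order all_algebra.
From mathcomp Require Import zify ring.
From mathcomp Require Import complex reals.
Set Implicit Arguments. Unset Strict Implicit. Unset Printing Implicit Defensive.
Import GRing.Theory Num.Theory.
Local Open Scope ring_scope.

(** * Polynomials in an endomorphism of a module *)

Section PolyOp.
Variables (R : comNzRingType) (M : lmodType R) (A : {linear M -> M}).
Implicit Types (p q : {poly R}) (u v : M).

Definition poly_op p v : M := \sum_(i < size p) p`_i *: iter i A v.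

Lemma iter_linearP n a u v : iter n A (a *: u + v) = a *: iter n A u + iter n A v.
Proof. by elim: n => //= n ->; rewrite linearP. Qed.

Lemma poly_op_is_linear p : linear (poly_op p).
Proof.
move=> a u v; rewrite /poly_op scaler_sumr -big_split; apply: eq_bigr => i _ /=.
by rewrite iter_linearP scalerDr !scalerA mulrC.
Qed.
HB.instance Definition _ p :=
  GRing.isLinear.Build R M M *:%R (poly_op p) (poly_op_is_linear p).

Lemma poly_op_widen n p v : (size p <= n)%N ->
  poly_op p v = \sum_(i < n) p`_i *: iter i A v.
Proof.
move=> le_pn; rewrite /poly_op (big_ord_widen n (fun i => p`_i *: iter i A v)) //.
rewrite big_mkcond; apply: eq_bigr => i _.
by case: ltnP => // le_pi; rewrite nth_default ?scale0r.
Qed.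

Lemma poly_op0 v : poly_op 0 v = 0.
Proof. by rewrite /poly_op size_poly0 big_ord0. Qed.

Lemma poly_opD p q v : poly_op (p + q) v = poly_op p v + poly_op q v.
Proof.
have le_p := leq_maxl (size p) (size q); have le_q := leq_maxr (size p) (size q).
have le_pq := leq_trans (size_polyD p q) (leqnn _).
rewrite !(poly_op_widen v le_pq) (poly_op_widen v le_p) (poly_op_widen v le_q).
by rewrite -big_split; apply: eq_bigr => i _; rewrite coefD scalerDl.
Qed.

Lemma poly_opZ a p v : poly_op (a *: p) v = a *: poly_op p v.
Proof.
rewrite (poly_op_widen v (size_scale_leq a p)) /poly_op scaler_sumr.
by apply: eq_bigr => i _; rewrite coefZ scalerA.
Qed.

Lemma poly_opN p v : poly_op (- p) v = - poly_op p v.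
Proof. by rewrite -[- p]scaleN1r poly_opZ scaleN1r. Qed.

Lemma poly_opB p q v : poly_op (p - q) v = poly_op p v - poly_op q v.
Proof. by rewrite poly_opD poly_opN. Qed.

Lemma poly_opC a v : poly_op a%:P v = a *: v.
Proof. by rewrite (@poly_op_widen 1) ?size_polyC_leq1 // big_ord1 coefC. Qed.

Lemma poly_opX v : poly_op 'X v = A v.
Proof.
rewrite (@poly_op_widen 2) ?size_polyX // !big_ord_recl big_ord0 !coefX /=.
by rewrite scale0r scale1r add0r addr0.
Qed.

Lemma poly_opMX p v : poly_op (p * 'X) v = poly_op p (A v).
Proof.
rewrite (@poly_op_widen (size p).+1); last first.
  by rewrite (leq_trans (size_polyMleq _ _)) // size_polyX addn2.
rewrite big_ord_recl coefMX scale0r add0r.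
by apply: eq_bigr => i _; rewrite coefMX -iterSr.
Qed.

Lemma poly_opM p q v : poly_op (p * q) v = poly_op p (poly_op q v).
Proof.
elim/poly_ind: q v => [|q a IHq] v; first by rewrite mulr0 !poly_op0 linear0.
rewrite mulrDr mulrA poly_opD poly_opMX IHq [p * _]mulrC mul_polyC poly_opZ.
by rewrite poly_opD poly_opMX poly_opC linearD linearZ.
Qed.

Lemma poly_op_shift (B : {linear M -> M}) c :
    (forall v, B (A v) = A (B v) + c *: B v) ->
  forall p v, B (poly_op p v) = poly_op (p \Po ('X + c%:P)) (B v).
Proof.
move=> BA; elim/poly_ind => [|p a IHp] v; first by rewrite comp_poly0 !poly_op0 linear0.
rewrite poly_opD poly_opMX poly_opC linearD linearZ IHp BA comp_polyD comp_polyM.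
by rewrite comp_polyX comp_polyC poly_opD poly_opM poly_opC poly_opD poly_opX poly_opC.
Qed.

Lemma poly_op_comm (B : {linear M -> M}) :
  (forall v, B (A v) = A (B v)) -> forall p v, B (poly_op p v) = poly_op p (B v).
Proof.
move=> BA p v; rewrite (@poly_op_shift B 0) ?addr0 ?comp_polyXr // => u.
by rewrite scale0r addr0.
Qed.

End PolyOp.

Section PolyOpClosedField.
Variables (K : closedFieldType) (M : lmodType K) (A : {linear M -> M}).

Lemma poly_op_eigenvector (p : {poly K}) (v : M) :
  p != 0 -> v != 0 -> poly_op A p v = 0 -> exists l u, u != 0 /\ A u = l *: u.
Proof.
move: {2}(size p) (leqnn (size p)) => n; elim: n p v => [|n IHn] p v le_pn nz_p nz_v pv0.
  by move: le_pn; rewrite leqn0 size_poly_eq0 (negbTE nz_p).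
have [p1 | p_neq1] := eqVneq (size p) 1%N.
  move: pv0; rewrite (size1_polyC (eq_leq p1)) poly_opC => /eqP.
  rewrite scaler_eq0 (negbTE nz_v) orbF => /eqP p0_0.
  by move: nz_p; rewrite (size1_polyC (eq_leq p1)) p0_0 eqxx.
have [l /factor_theorem [q def_p]] := closed_rootP p p_neq1.
have nz_q : q != 0 by apply: contraNneq nz_p => q0; rewrite def_p q0 mul0r.
have [qv0 | nz_qv] := eqVneq (poly_op A q v) 0.
  apply: (IHn q v) => //; move: le_pn.
  by rewrite def_p size_Mmonic ?monicXsubC // size_XsubC addn2.
exists l, (poly_op A q v); split=> //; apply/eqP; rewrite -subr_eq0; apply/eqP.
by rewrite -pv0 def_p mulrC poly_opM -polyCN poly_opD poly_opX poly_opC scaleNr.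
Qed.

End PolyOpClosedField.

(** * Modules over a domain *)

Section TorsionFreeModule.
Variables (R : idomainType) (M : lmodType R).

Lemma span_dependent m k (us : 'I_m -> M) (w : 'I_k -> M) (A : 'I_k -> 'I_m -> R) :
    (m < k)%N -> (forall j, w j = \sum_i A j i *: us i) ->
  exists2 a : 'I_k -> R, (exists j, a j != 0) & \sum_j a j *: w j = 0.
Proof.
elim: m k us w A => [|m IHm] [//|k] us w A lt_mk def_w.
  exists (fun=> 1); first by exists ord0; rewrite oner_neq0.
  by rewrite big1 // => j _; rewrite def_w big_ord0 scaler0.
pose wid := widen_ord (leqnSn m); pose us' i := us (wid i).
have [A_max0 | /forallPn[j0 nz_c0]] := boolP [forall j, A j ord_max == 0]; last first.
  (* Eliminate [us ord_max] using [w j0], whose coefficient [c0] on it is nonzero. *)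
  set c0 := A j0 ord_max.
  pose w' j := c0 *: w (lift j0 j) - A (lift j0 j) ord_max *: w j0.
  pose A' j i := c0 * A (lift j0 j) (wid i) - A (lift j0 j) ord_max * A j0 (wid i).
  have [j|a' [j1 nz_a'j1] a'w'0] := IHm k us' w' A' lt_mk.
    have -> : \sum_i A' j i *: us' i = c0 *: \sum_i A (lift j0 j) (wid i) *: us' i
                - A (lift j0 j) ord_max *: \sum_i A j0 (wid i) *: us' i.
      by rewrite !scaler_sumr -sumrB; apply: eq_bigr => i _; rewrite !scalerA scalerBl.
    rewrite /w' !def_w !big_ord_recr /= !scalerDr !scalerA [A _ ord_max * c0]mulrC.
    by rewrite opprD addrACA subrr addr0.
  pose a j := if unlift j0 j is Some j' then a' j' * c0
              else - \sum_j' a' j' * A (lift j0 j') ord_max.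
  exists a; first by exists (lift j0 j1); rewrite /a liftK mulf_neq0.
  rewrite (bigD1_ord j0) //= /a unlift_none; under eq_bigr => j _ do rewrite liftK.
  rewrite -[RHS]a'w'0 /w'; under [RHS]eq_bigr => j _ do rewrite scalerBr !scalerA.
  by rewrite sumrB scaleNr scaler_suml addrC.
apply: (IHm k.+1 us' w (fun j i => A j (wid i))) => [|j]; first exact: ltnW.
by rewrite def_w big_ord_recr /= (eqP (forallP A_max0 j)) scale0r addr0.
Qed.

Hypothesis M_torsion_free : forall (a : R) (v : M), a != 0 -> a *: v = 0 -> v = 0.

Lemma eigenvectors_independent (Om : {linear M -> M}) k (c : 'I_k -> R)
    (u : 'I_k -> M) (a : 'I_k -> R) :
    injective c -> (forall j, u j != 0) -> (forall j, Om (u j) = c j *: u j) ->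
  \sum_j a j *: u j = 0 -> forall j, a j = 0.
Proof.
elim: k c u a => [|k IHk] c u a c_inj nz_u Om_u au0 j; first by case: j.
pose wid := widen_ord (leqnSn k).
have Om_sub i : Om (a i *: u i) - c ord_max *: (a i *: u i)
               = (a i * (c i - c ord_max)) *: u i.
  by rewrite linearZZ Om_u !scalerA mulrBr scalerBl [c ord_max * _]mulrC.
have au'0 : \sum_(j < k) (a (wid j) * (c (wid j) - c ord_max)) *: u (wid j) = 0.
  transitivity (Om (\sum_j a j *: u j) - c ord_max *: \sum_j a j *: u j).
    rewrite linear_sum scaler_sumr -sumrB big_ord_recr /= Om_sub subrr mulr0.
    by rewrite scale0r addr0; apply: eq_bigr => i _; rewrite Om_sub.
  by rewrite au0 linear0 scaler0 subr0.
have a_wid0 i : a (wid i) = 0.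
  have wid_inj : injective (c \o wid).
    by move=> i1 i2 /c_inj /(congr1 val) /= /val_inj.
  have /eqP := IHk _ _ _ wid_inj (fun i => nz_u (wid i)) (fun i => Om_u (wid i)) au'0 i.
  rewrite mulf_eq0 subr_eq0 => /orP[/eqP // | /eqP /c_inj /(congr1 val) /= eq_ik].
  by move: (ltn_ord i); rewrite eq_ik ltnn.
have a_max0 : a ord_max = 0.
  move: au0; rewrite big_ord_recr big1 /= => [|i _]; last by rewrite a_wid0 scale0r.
  rewrite add0r => au0; apply/eqP; apply: contraNT (nz_u ord_max) => nz_a.
  by apply/eqP; exact: M_torsion_free nz_a au0.
case: (unliftP ord_max j) => [i ->|->]; last exact: a_max0.
by rewrite (_ : lift _ i = wid i) ?a_wid0 //; apply/val_inj/lift_max.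
Qed.

Section FiniteRank.
Variables (n : nat) (vs : 'I_n -> M).
Hypothesis vs_span : forall v : M,
  exists (s : R) (a : 'I_n -> R), s != 0 /\ s *: v = \sum_i a i *: vs i.

Lemma rank_dependent (w : 'I_n.+1 -> M) :
  exists2 a : 'I_n.+1 -> R, (exists j, a j != 0) & \sum_j a j *: w j = 0.
Proof.
have : forall j, exists sa : R * ('I_n -> R),
    sa.1 != 0 /\ sa.1 *: w j = \sum_i sa.2 i *: vs i.
  by move=> j; have [s [a]] := vs_span (w j); exists (s, a).
case/fin_all_exists => sa sa_w.
have [a [j nz_aj] aw0] := span_dependent (ltnSn n) (fun j => (sa_w j).2).
exists (fun j => a j * (sa j).1); first by exists j; rewrite mulf_neq0 ?(sa_w j).1.
by rewrite -[RHS]aw0; apply: eq_bigr => i _; rewrite scalerA.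
Qed.

Lemma annihilating_poly (Om : {linear M -> M}) :
  exists2 P : {poly R}, P != 0 & forall v, poly_op Om P v = 0.
Proof.
have [Q nz_Q Q_vs] : exists2 Q : 'I_n -> {poly R},
    forall i, Q i != 0 & forall i, poly_op Om (Q i) (vs i) = 0.
  have /fin_all_exists2[a nz_a a_vs] := fun i => rank_dependent (fun j => iter j Om (vs i)).
  exists (fun i => \poly_(j < n.+1) a i (inord j)) => i.
    have [j nz_aij] := nz_a i; apply: contraNneq nz_aij => Qi0.
    have := coef_poly n.+1 (fun j => a i (inord j)) j.
    by rewrite Qi0 coef0 ltn_ord inord_val => ->.
  rewrite (poly_op_widen _ _ (size_poly _ _)) -[RHS](a_vs i).
  by apply: eq_bigr => j _; rewrite coef_poly ltn_ord inord_val.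
exists (\prod_i Q i); first by rewrite prodf_seq_neq0; apply/allP => i _; exact: nz_Q.
have P_vs i : poly_op Om (\prod_i Q i) (vs i) = 0.
  by rewrite (bigD1 i) //= mulrC poly_opM Q_vs linear0.
move=> v; have [s [b [nz_s def_sv]]] := vs_span v.
apply: (M_torsion_free nz_s); rewrite -linearZ /= def_sv linear_sum big1 // => i _.
by rewrite linearZ /= P_vs scaler0.
Qed.

End FiniteRank.

End TorsionFreeModule.

(** * Shifts of polynomials *)

Lemma size_comp_XsubC_sub (R : idomainType) (p : {poly R}) (c : R) :
  (size (p \Po ('X - c%:P) - p)%R <= (size p).-1)%N.
Proof.
have [-> | nz_p] := eqVneq p 0; first by rewrite comp_poly0 subr0 size_poly0.
have size_comp : size (p \Po ('X - c%:P)) = size p by rewrite size_comp_poly2 ?size_XsubC.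
have lead_comp : lead_coef (p \Po ('X - c%:P)) = lead_coef p.
  by rewrite lead_coef_comp ?size_XsubC // lead_coefXsubC expr1n mulr1.
apply/leq_sizeP => j le_j; rewrite coefB.
have [lt_jp | le_pj] := ltnP j (size p); last by rewrite !nth_default ?size_comp ?subrr.
have -> : j = (size p).-1 by move: le_j lt_jp; case: (size p) => //= n; lia.
by rewrite -{1}size_comp -!lead_coefE lead_comp subrr.
Qed.

Lemma shift_invariant_polyC (R : numDomainType) (p : {poly R}) :
  p \Po ('X - 1%:P) = p -> p = (p`_0)%:P.
Proof.
move=> p_shift; apply/eqP; rewrite -subr_eq0; apply/eqP; set q := p - _.
have p_pred x : p.[x - 1] = p.[x] by rewrite -{2}p_shift horner_comp hornerXsubC.
have q_root k : root q (- k%:R).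
  rewrite /root /q !hornerE; elim: k => [|k]; first by rewrite oppr0 horner_coef0 subrr.
  by rewrite -natr1 opprD p_pred.
apply: (@roots_geq_poly_eq0 _ _ [seq - k%:R | k <- iota 0 (size q)]).
- by apply/allP => _ /mapP[k _ ->].
- by rewrite map_inj_uniq ?iota_uniq // => i j /oppr_inj/eqP; rewrite eqr_nat => /eqP.
- by rewrite size_map size_iota.
Qed.

(** * sl(2)-modules *)

Section Sl2Module.
Variables (C : numClosedFieldType) (V : lmodType C) (rho : sl2_module V).
Local Notation e := (rho_e rho).
Local Notation f := (rho_f rho).
Local Notation h := (rho_h rho).
Local Notation L0 := (L0 rho).
Implicit Types (p : {poly C}) (v : V).

Lemma two_neq0 : (2%:R : C) != 0. Proof. by rewrite pnatr_eq0. Qed.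

Lemma h_L0 v : h v = - (2%:R *: L0 v).
Proof. by rewrite /Defs.L0 scalerN opprK scalerA mulfV ?two_neq0 // scale1r. Qed.

Lemma L0_is_linear : linear L0.
Proof. by move=> a u v; rewrite /Defs.L0 linearP scalerDr !scalerN opprD !scalerA mulrC. Qed.
HB.instance Definition _ := GRing.isLinear.Build C V V *:%R L0 L0_is_linear.

Lemma e_L0 v : e (L0 v) = L0 (e v) + e v.
Proof.
have := sl2_he rho v; rewrite !h_L0 (linearN e) (linearZZ e) opprK addrC -scalerBr.
by move/(scalerI two_neq0)/eqP; rewrite subr_eq addrC => /eqP.
Qed.

Lemma f_L0 v : f (L0 v) = L0 (f v) - f v.
Proof.
have := sl2_hf rho v; rewrite !h_L0 (linearN f) (linearZZ f) opprK addrC -scalerBr -scalerN.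
by move/(scalerI two_neq0)/eqP; rewrite subr_eq addrC => /eqP.
Qed.

Lemma e_f v : e (f v) = f (e v) - 2%:R *: L0 v.
Proof. by apply/eqP; rewrite -h_L0 addrC -subr_eq sl2_ef. Qed.

(* The C[z]-module structure of the paper, on a copy of V: p *: v is zact rho p v. *)
Definition czmod of sl2_module V : Type := V.
Local Notation Vz := (czmod rho).
HB.instance Definition _ := GRing.Zmodule.on Vz.
Fact zact1 (v : V) : zact rho 1 v = v.
Proof. by rewrite -polyC1; exact: etrans (poly_opC L0 1 v) (scale1r v). Qed.

HB.instance Definition _ := GRing.Zmodule_isLmodule.Build {poly C} Vz
  (fun p q v => esym (poly_opM L0 p q v)) zact1
  (fun p => raddfD (poly_op L0 p)) (fun v p q => poly_opD L0 p q v).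

(* The same action as [Defs.zact rho], written with [poly_op] so that the lemmas
   on [poly_op] apply. *)
Local Notation zact := (poly_op L0).

Lemma e_zact p v : e (zact p v) = zact (p \Po ('X + 1%:P)) (e v).
Proof. by apply: poly_op_shift => u; rewrite e_L0 scale1r. Qed.

Lemma f_zact p v : f (zact p v) = zact (p \Po ('X - 1%:P)) (f v).
Proof. by rewrite -polyCN; apply: poly_op_shift => u; rewrite f_L0 scaleN1r. Qed.

Section CzLinear.
Variables (g : {linear V -> V}) (g_L0 : forall v, g (L0 v) = L0 (g v)).

(* The proof argument is unused; it only lets the instance below depend on it. *)
Definition czlin of (forall v, g (L0 v) = L0 (g v)) : Vz -> Vz := g.

Lemma czlin_is_linear : linear (czlin g_L0).
Proof. by move=> p u v; rewrite /czlin linearD; congr (_ + _); exact: (poly_op_comm g_L0). Qed.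
HB.instance Definition _ :=
  GRing.isLinear.Build {poly C} Vz Vz *:%R (czlin g_L0) czlin_is_linear.

End CzLinear.

Lemma casimirE v : casimir rho v = zact ('X * ('X - 1%:P)) v + f (e v).
Proof.
rewrite /casimir /Lm1 /L1 (linearN f) [- - f _]opprK mulrBr mulr1 poly_opB.
by rewrite !poly_opM !poly_opX; reflexivity.
Qed.

Lemma casimir_is_linear : linear (casimir rho).
Proof. by move=> a u v; rewrite !casimirE !linearP /= scalerDr addrACA. Qed.
HB.instance Definition _ := GRing.isLinear.Build C V V *:%R (casimir rho) casimir_is_linear.

Lemma casimir_zact p v : casimir rho (zact p v) = zact p (casimir rho v).
Proof.
rewrite !casimirE e_zact f_zact -comp_polyA comp_polyD comp_polyX comp_polyC subrK.
by rewrite comp_polyXr linearD /= -!poly_opM mulrC.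
Qed.

Lemma casimir_L0 v : casimir rho (L0 v) = L0 (casimir rho v).
Proof. by rewrite -!(poly_opX L0) casimir_zact. Qed.

Lemma casimir_e v : casimir rho (e v) = e (casimir rho v).
Proof.
rewrite !casimirE linearD e_zact e_f -(poly_opX L0) -(poly_opC L0) -(poly_opM L0) addrA addrAC.
rewrite -(poly_opB L0); congr (zact _ _ + _).
by rewrite !(comp_polyM, comp_polyD, comp_polyB, comp_polyX, comp_polyC); ring.
Qed.

Lemma casimir_f v : casimir rho (f v) = f (casimir rho v).
Proof.
rewrite !casimirE linearD f_zact e_f -(poly_opX L0) -(poly_opC L0) -(poly_opM L0) linearB f_zact.
rewrite addrA addrAC -(poly_opB L0); congr (zact _ _ + _).
by rewrite !(comp_polyM, comp_polyD, comp_polyB, comp_polyX, comp_polyC); ring.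
Qed.

Lemma casimir_h v : casimir rho (h v) = h (casimir rho v).
Proof. by rewrite !h_L0 (linearN (casimir rho)) (linearZZ (casimir rho)) /= casimir_L0. Qed.

Lemma casimir_sl2_endomorphism : sl2_endomorphism rho (casimir rho).
Proof. by move=> v; split; [exact: casimir_e | exact: casimir_f | exact: casimir_h]. Qed.

Lemma torsion_free_zact : torsion_free rho -> forall p v, p != 0 -> zact p v = 0 -> v = 0.
Proof.
move=> tf p v nz_p pv0; apply/eqP/negPn/negP => nz_v.
by move/negP: (tf p v nz_p nz_v); apply; apply/eqP; exact: pv0.
Qed.

Section LowestWeightVector.
Variable y : V.
Hypothesis ey0 : e y = 0.

Lemma e_iter_f k :
  e (iter k.+1 f y) = zact (k.+1%:R%:P * (k%:R%:P - 2%:R%:P * 'X)) (iter k f y).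
Proof.
elim: k => [|k IHk] /=.
  rewrite e_f ey0 linear0 sub0r -(poly_opX L0) -(poly_opC L0) -(poly_opM L0).
  by rewrite -poly_opN; congr (zact _ _); rewrite !polyC_natr; ring.
rewrite e_f IHk f_zact -(poly_opX L0) -(poly_opC L0) -(poly_opM L0) -(poly_opB L0).
congr (zact _ _); rewrite !(comp_polyM, comp_polyB, comp_polyX, comp_polyC).
by rewrite !polyC_natr polyC1; ring.
Qed.

Lemma iter_f_neq0 : torsion_free rho -> y != 0 -> forall k, iter k f y != 0.
Proof.
move=> tf nz_y; elim=> // k IHk; apply: contra IHk => /eqP fky0; apply/eqP.
have := e_iter_f k; rewrite fky0 linear0 => /esym /(torsion_free_zact tf); apply.
rewrite mulf_neq0 ?polyC_eq0 ?pnatr_eq0 //; apply/eqP => /(congr1 (coefp 1)) /=.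
by rewrite coefB coefC coefCM coefX mulr1 sub0r coef0 => /eqP; rewrite oppr_eq0 pnatr_eq0.
Qed.

Definition casimir_poly (j : nat) : {poly C} := ('X - j%:R%:P) * ('X - j.+1%:R%:P).

Lemma casimir_iter_f j : casimir rho (iter j f y) = zact (casimir_poly j) (iter j f y).
Proof.
elim: j => [|j IHj] /=; last first.
  rewrite casimir_f IHj f_zact /casimir_poly; congr (zact _ _).
  by rewrite !(comp_polyM, comp_polyB, comp_polyX, comp_polyC) !polyC_natr; ring.
rewrite casimirE ey0 linear0 addr0 /casimir_poly; congr (zact _ _).
by rewrite !polyC_natr; ring.
Qed.

End LowestWeightVector.

Lemma casimir_poly_inj : injective casimir_poly.
Proof.
move=> j k /(congr1 (horner^~ 0)); rewrite !hornerM !hornerXsubC !sub0r !mulrNN.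
by rewrite -!natrM => /eqP; rewrite eqr_nat => /eqP; nia.
Qed.

Lemma e_injective : torsion_free rho -> finite_rank rho -> forall y, e y = 0 -> y = 0.
Proof.
move=> tf [n [vs vs_span]] y ey0; apply/eqP; apply: contraT => nz_y.
have [a [j nz_aj] a_rel] := rank_dependent (M := Vz) vs_span (fun j : 'I_n.+1 => iter j f y).
have c_inj : injective (fun j : 'I_n.+1 => casimir_poly j).
  by move=> i1 i2 /casimir_poly_inj /val_inj.
have a0 := eigenvectors_independent (M := Vz) (torsion_free_zact tf)
  (Om := czlin casimir_L0) c_inj (fun j => iter_f_neq0 ey0 tf nz_y j)
  (fun j => casimir_iter_f ey0 j) a_rel.
by rewrite a0 eqxx in nz_aj.
Qed.

Section Sl2Endomorphism.
Variable phi : {linear V -> V}.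
Hypotheses (phi_sl2 : sl2_endomorphism rho phi) (tf : torsion_free rho) (rk : finite_rank rho).

Lemma endo_L0 v : phi (L0 v) = L0 (phi v).
Proof. by rewrite /Defs.L0 (linearN phi) (linearZZ phi); case: (phi_sl2 v) => _ _ ->. Qed.

Local Notation phiz := (czlin endo_L0).

Lemma poly_op_endoE n (P : {poly {poly C}}) v : (size P <= n)%N ->
  poly_op phiz P v = \sum_(i < n) zact P`_i (iter i phi v).
Proof. exact: poly_op_widen. Qed.

Lemma e_poly_op_endo (P : {poly {poly C}}) v :
  e (poly_op phiz P v) = poly_op phiz (map_poly (comp_poly ('X + 1%:P)) P) (e v).
Proof.
rewrite (poly_op_endoE _ (leqnn _)) (poly_op_endoE _ (size_poly _ _)) linear_sum.
apply: eq_bigr => i _; rewrite coef_map_id0 ?comp_poly0 // e_zact; congr (zact _ _).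
by elim: (nat_of_ord i) => //= k <-; case: (phi_sl2 (iter k phi v)).
Qed.

Lemma annihilator_shift P : (forall v, poly_op phiz P v = 0) ->
  forall v, poly_op phiz (map_poly (comp_poly ('X - 1%:P)) P) v = 0.
Proof.
move=> P0 v; apply: (e_injective tf rk); rewrite e_poly_op_endo.
rewrite -map_poly_comp_id0 ?comp_poly0 // map_poly_id ?P0 // => p _ /=.
by rewrite -comp_polyA comp_polyB comp_polyX comp_polyC addrK comp_polyXr.
Qed.

Lemma constant_annihilator : exists2 Q : {poly C}, Q != 0 & forall v, poly_op phi Q v = 0.
Proof.
have [n [vs vs_span]] := rk.
have [P nz_P P0] := annihilating_poly (M := Vz) (torsion_free_zact tf) vs_span phiz.
have [d le_Pd] : exists d, forall i, (size (P`_i)%R <= d)%N.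
  exists (\max_(i < size P) size (P`_i)%R) => i; have [lt_iP | le_Pi] := ltnP i (size P).
    exact: (leq_bigmax (F := fun j : 'I_(size P) => size P`_j) (Ordinal lt_iP)).
  by rewrite nth_default ?size_poly0.
elim: d P nz_P P0 le_Pd => [|d IHd] P nz_P P0 le_Pd.
  case/negP: nz_P; apply/eqP/polyP => i; apply/eqP.
  by rewrite coef0 -size_poly_eq0 -leqn0 le_Pd.
set D := map_poly (comp_poly ('X - 1%:P)) P - P.
have coefD i : D`_i = P`_i \Po ('X - 1%:P) - P`_i by rewrite coefB coef_map_id0 ?comp_poly0.
have [D0 | nz_D] := eqVneq D 0; last first.
  apply: (IHd D nz_D) => [v | i]; first by rewrite poly_opB annihilator_shift ?P0 ?subr0.
  by rewrite coefD (leq_trans (size_comp_XsubC_sub _ _)) //; have := le_Pd i; lia.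
have P_const i : P`_i = ((P`_i)`_0)%:P.
  by apply: shift_invariant_polyC; apply/eqP; rewrite -subr_eq0 -coefD D0 coef0.
exists (map_poly (coefp 0) P).
  apply: contraNneq nz_P => Q0; apply/eqP/polyP => i; rewrite coef0 P_const.
  by have := congr1 (coefp i) Q0; rewrite /= coef0 coef_map_id0 ?coef0 // => ->.
move=> v; rewrite -[RHS](P0 v) (poly_op_widen _ _ (size_poly _ _)) (poly_op_endoE _ (leqnn _)).
by apply: eq_bigr => i _; rewrite [in RHS](P_const i) poly_opC coef_map_id0 ?linear0 ?coefpE.
Qed.

Lemma endo_eigenvector : (exists v : V, v != 0) -> exists l u, u != 0 /\ phi u = l *: u.
Proof.
case=> v nz_v; have [Q nz_Q Q0] := constant_annihilator.
exact: poly_op_eigenvector nz_Q nz_v (Q0 v).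
Qed.

Lemma eigenspace_pure l : pure_submodule rho (fun v => phi v = l *: v).
Proof.
split; first split.
- by rewrite linear0 scaler0.
- by move=> u w phi_u phi_w; rewrite linearD phi_u phi_w scalerDr.
- by move=> a w phi_w; rewrite linearZZ phi_w !scalerA mulrC.
- move=> w phi_w; have [phi_e phi_f phi_h] := phi_sl2 w.
  by split; rewrite ?phi_e ?phi_f ?phi_h phi_w linearZZ.
move=> p v nz_p phi_pv; apply/eqP; rewrite -subr_eq0; apply/eqP.
apply: (torsion_free_zact tf nz_p).
have phi_zact : phi (zact p v) = l *: zact p v := phi_pv.
by rewrite linearB linearZZ /= -(poly_op_comm endo_L0) phi_zact subrr.
Qed.

End Sl2Endomorphism.

Lemma sl2_endomorphism_scalar (phi : {linear V -> V}) :
  purely_irreducible rho -> sl2_endomorphism rho phi -> exists c, forall v, phi v = c *: v.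
Proof.
case=> nz_V tf rk pure phi_sl2; have [l [u [nz_u phi_u]]] := endo_eigenvector phi_sl2 tf rk nz_V.
exists l; have [W0 | WV] := pure _ (eigenspace_pure phi_sl2 tf l); last exact: WV.
by case/eqP: nz_u; exact: W0 phi_u.
Qed.

End Sl2Module.

Unset Implicit Arguments.
Local Open Scope complex_scope.

Theorem proposition7p28 (R : realType) (V : lmodType R[i])
    (rho : sl2_module V) :
  purely_irreducible rho ->
  casimir_module rho /\
  (forall phi : {linear V -> V}, sl2_endomorphism rho phi ->
     exists c : R[i], forall v, phi v = c *: v).
Proof.
move=> PI; split; last by move=> phi; exact: sl2_endomorphism_scalar PI.
exact: sl2_endomorphism_scalar PI (casimir_sl2_endomorphism rho).
Qed.
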